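(* Under Conditions 1 and 2, there exist constants $C>0$ and $n_0\ge1$ such that for every $k\in\mathbb Z_+$, every $\mathbf y=(y_1,\dots,y_k)\in\mathbb R_+^k$ and every $n\ge n_0$, $$\sup_{t\ge0}R^{(n)}_\beta(t,k,\mathbf y)\le C\sum_{j=1}^k(1+y_j).$$
   Context: Notation: $\mathbb Z_+=\{1,2,\dots\}$, $\mathbb R_+=[0,\infty)$. For each $n\ge1$: $\lambda^{(n)}>0$; a probability $\Lambda^{(n)}$ on $\mathbb R_+$ with tail $\bar\Lambda^{(n)}(t)=\Lambda^{(n)}((t,\infty))$, $\eta^{(n)}=\int_0^\infty y\Lambda^{(n)}(dy)$, $\sigma^{(n)}=\frac12\int_0^\infty y^2\Lambda^{(n)}(dy)$ finite; probability laws $(p_k^{(n)})_{k\ge1}$, $(q_k^{(n)})_{k\ge1}$ on $\mathbb Z_+$ with generating functions $g^{(n)},h^{(n)}$, $m^{(n)}=\sum_kkp_k^{(n)}<\infty$; $\gamma_n>0$ with $\gamma_n\to\infty$, $\gamma_n/n\to\gamma_*\in[0,\infty)$. $\phi^{(n)}(z)=n\gamma_n[g^{(n)}(1-z/n)-(1-z/n)]$, $\psi^{(n)}(z)=\gamma_n[1-h^{(n)}(1-z/n)]$ for $z\in[0,n]$. Condition 1: (i) $\lambda^{(n)}\to\lambda>0$, $\eta^{(n)}\to\eta>0$, $\sigma^{(n)}\to\sigma>0$, $\gamma_n(1-\lambda^{(n)}\eta^{(n)})\to b\in\mathbb R$; (ii) $\psi^{(n)}\to\psi$ uniformly on compacts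 of $[0,\infty)$; (iii) $\{\phi^{(n)}\}$ is uniformly Lipschitz on bounded intervals and converges uniformly on compacts to a continuous $\phi$. Under Condition 1, $\lambda\eta=1$ and $m:=\lim_n\gamma_n(1-m^{(n)})$ exists (so $\gamma_n(1-\lambda^{(n)}\eta^{(n)}m^{(n)})\to b+m$). Condition 2 (for some $\alpha\in(1,2)$): (1) there are $C,k_0>0$ with $n\gamma_n\sum_{k\ge k_0}(k/n)^\alpha p^{(n)}_k+\sum_kk^\alpha q^{(n)}_k\le C$ for all $n$, and $\lim_{k_1\to\infty}\limsup_n\gamma_n\sum_{k\ge k_1}kp^{(n)}_k=0$; (2) there are $C_0>0$ and a probability $\Lambda^*$ on $\mathbb R_+$ with $\int t^{2\alpha}\Lambda^*(dt)<\infty$ and $\bar\Lambda^{(n)}\le C_0\bar\Lambda^*$ for all $n$. Fix $\beta\in[0,\infty)$ with $\beta>-(b+m)/(\sigma\lambda)$. Let $R^{(n)}$ be the unique locally integrable solution of $R^{(n)}(t)=\lambda^{(n)}m^{(n)}\bar\Lambda^{(n)}(t)+\lambda^{(n)}m^{(n)}\int_0^tR^{(n)}(t-s)\bar\Lambda^{(n)}(s)ds$, $t\ge0$, and $R^{(n)}_\beta(t)=e^{-\beta t/\gamma_n}R^{(n)}(t)$. For $k\in\mathbb Z_+$, $\mathbf y=(y_1,\dots,y_k)\in\mathbb R_+^k$: $R^{(n)}(t,k,\mathbf y)=\sum_{j=1}^k\big[\lambda^{(n)}\mathbf 1_{\{y_j>t\}}+\lambda^{(n)}\int_0^tR^{(n)}(t-s)\mathbf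 1_{\{y_j>s\}}ds\big]$ and $R^{(n)}_\beta(t,k,\mathbf y)=e^{-\beta t/\gamma_n}R^{(n)}(t,k,\mathbf y)$. *)

From Stdlib Require Import Reals Lra ClassicalEpsilon.
Open Scope R_scope.

(* Riemann integral value: Rint f a b v <-> f is Riemann integrable on [a,b]
   with integral v (RiemannInt does not depend on the proof). *)
Definition Rint (f : R -> R) (a b v : R) : Prop :=
  exists pr : Riemann_integrable f a b, RiemannInt pr = v.

(* Total version (value of the Riemann integral when it exists, junk otherwise). *)
Definition RI (f : R -> R) (a b : R) : R :=
  epsilon (inhabits 0) (fun v => Rint f a b v).

Definition ImpInt (f : R -> R) (l : R) : Prop :=
  (forall T, 0 <= T -> inhabited (Riemann_integrable f 0 T)) /\
  (forall eps, 0 < eps -> exists M, forall T, M <= T -> Rabs (RI f 0 T - l) < eps).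

Definition series (u : nat -> R) : R :=
  epsilon (inhabits 0) (fun l => infinite_sum u l).

Fixpoint fsum (k : nat) (f : nat -> R) : R :=
  match k with O => 0 | S k' => fsum k' f + f k' end.

(* finite sum sum_{j=a}^{b} f j (empty if b < a) *)
Definition fsum_range (a b : nat) (f : nat -> R) : R :=
  fsum (S b - a) (fun i => f (a + i)%nat).

(* Lb is the tail function t |-> Lambda((t,infinity)) of a probability
   measure Lambda on R_+ (this characterises Lambda). *)
Definition prob_tail (Lb : R -> R) : Prop :=
  (forall t, 0 <= t -> 0 <= Lb t <= 1) /\
  (forall s t, 0 <= s -> s <= t -> Lb t <= Lb s) /\
  (forall t, 0 <= t -> forall eps, 0 < eps ->
      exists d, 0 < d /\ forall s, t <= s < t + d -> Rabs (Lb s - Lb t) < eps) /\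
  (forall eps, 0 < eps -> exists M, forall t, M <= t -> Lb t < eps).

(* (p k)_{k>=1} is a probability law on Z_+ *)
Definition prob_Zplus (p : nat -> R) : Prop :=
  p 0%nat = 0 /\ (forall k, 0 <= p k) /\ infinite_sum p 1.

Definition genfun (p : nat -> R) (s : R) : R := series (fun k => p k * s ^ k).

Definition phi_n (p : nat -> R) (gam : R) (n : nat) (z : R) : R :=
  INR n * gam * (genfun p (1 - z / INR n) - (1 - z / INR n)).

Definition psi_n (q : nat -> R) (gam : R) (n : nat) (z : R) : R :=
  gam * (1 - genfun q (1 - z / INR n)).

Definition ind_gt (a b : R) : R := if Rlt_dec b a then 1 else 0.

Definition Rtky (lam : R) (Rs : R -> R) (t : R) (k : nat) (y : nat -> R) : R :=
  fsum k (fun j => lam * ind_gt (y j) t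
                   + lam * RI (fun s => Rs (t - s) * ind_gt (y j) s) 0 t).

Definition Rbeta_tky (beta gam lam : R) (Rs : R -> R) (t : R) (k : nat) (y : nat -> R) : R :=
  exp (- beta * t / gam) * Rtky lam Rs t k y.

From Stdlib Require Import Reals Lra Lia ClassicalEpsilon Classical.
From Coquelicot Require Import Coquelicot.
Open Scope R_scope.

(* Put K_n = lam_n m_n and r_n = beta / gam_n.  The tilted kernel
   g(u) = exp(-r_n u) R^(n)(u) solves the renewal equation g = f + g * f with
   kernel f(s) = K_n exp(-r_n s) Lb_n(s), nonincreasing with values in [0,K_n]
   (here (g * f)(t) = int_0^t g(t-s) f(s) ds).
   1. Renewal bound: if moreover int_0^T f <= 1 for all T, then g <= 362 K_n.
      The function 362 K - 180 K exp(-20 K u) is a supersolution, and a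
      comparison principle for d <= d * f keeps g below it.
   2. Laplace bound: exp(-x) <= 1 - x + x^2 and a tail estimate for
      int s Lb_n(s) ds, uniform in n (from the 2 alpha-moment of the dominating
      law), give int_0^T f <= K_n (eta_n - r sig_n + r^2 S sig_n + r del).
   3. Asymptotics: gam_n (K_n eta_n - 1) -> -(b + m) < beta lam sig, so this
      bound is at most 1 for large n.
   4. Each summand of R^(n)_beta(t,k,y) is then at most lam_n (1 + 362 K_n y_j). *)

Lemma RI_RInt f a b : ex_RInt f a b -> RI f a b = RInt f a b.
Proof.
  intros H. unfold RI.
  assert (Hx : exists v, Rint f a b v).
  { exists (RInt f a b). exists (ex_RInt_Reals_0 _ _ _ H). symmetry. apply RInt_Reals. }
  destruct (epsilon_spec (inhabits 0) (fun v => Rint f a b v) Hx) as [pr Hpr].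
  rewrite <- Hpr. symmetry. apply RInt_Reals.
Qed.

Lemma ex_RInt_of_Riemann (f : R -> R) T :
  inhabited (Riemann_integrable f 0 T) -> ex_RInt f 0 T.
Proof. intros [pr]. apply ex_RInt_Reals_1. exact pr. Qed.

(* Coquelicot states its integration lemmas over an arbitrary normed module,
   which unification cannot infer from a goal about a real function; these
   are the instances for real-valued functions. *)
Lemma ex_RInt_sub_l (f : R -> R) a b c : a <= b <= c -> ex_RInt f a c -> ex_RInt f a b.
Proof. intros. exact (@ex_RInt_Chasles_1 R_CompleteNormedModule f a b c H H0). Qed.
Lemma ex_RInt_sub_r (f : R -> R) a b c : a <= b <= c -> ex_RInt f a c -> ex_RInt f b c.
Proof. intros. exact (@ex_RInt_Chasles_2 R_CompleteNormedModule f a b c H H0). Qed.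
Lemma ex_RInt_plusR (f g : R -> R) a b :
  ex_RInt f a b -> ex_RInt g a b -> ex_RInt (fun x => f x + g x) a b.
Proof. intros. exact (@ex_RInt_plus R_NormedModule f g a b H H0). Qed.
Lemma ex_RInt_minusR (f g : R -> R) a b :
  ex_RInt f a b -> ex_RInt g a b -> ex_RInt (fun x => f x - g x) a b.
Proof. intros. exact (@ex_RInt_minus R_NormedModule f g a b H H0). Qed.
Lemma ex_RInt_scalR (f : R -> R) a b l : ex_RInt f a b -> ex_RInt (fun x => l * f x) a b.
Proof. intros. exact (@ex_RInt_scal R_NormedModule f a b l H). Qed.
Lemma ex_RInt_constR a b (c : R) : ex_RInt (fun _ => c) a b.
Proof. exact (@ex_RInt_const R_NormedModule a b c). Qed.
Lemma RInt_plusR (f g : R -> R) a b : ex_RInt f a b -> ex_RInt g a b ->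
  RInt (fun x => f x + g x) a b = RInt f a b + RInt g a b.
Proof. intros. exact (@RInt_plus R_CompleteNormedModule f g a b H H0). Qed.
Lemma RInt_minusR (f g : R -> R) a b : ex_RInt f a b -> ex_RInt g a b ->
  RInt (fun x => f x - g x) a b = RInt f a b - RInt g a b.
Proof. intros. exact (@RInt_minus R_CompleteNormedModule f g a b H H0). Qed.
Lemma RInt_scalR (f : R -> R) a b l : ex_RInt f a b -> RInt (fun x => l * f x) a b = l * RInt f a b.
Proof. intros. exact (@RInt_scal R_CompleteNormedModule f a b l H). Qed.
Lemma RInt_constR a b (c : R) : RInt (fun _ => c) a b = c * (b - a).
Proof. rewrite (@RInt_const R_CompleteNormedModule). unfold scal; simpl. unfold mult; simpl. ring. Qed.
Lemma RInt_ChaslesR (f : R -> R) a b c : ex_RInt f a b -> ex_RInt f b c ->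
  RInt f a b + RInt f b c = RInt f a c.
Proof. intros. exact (@RInt_Chasles R_CompleteNormedModule f a b c H H0). Qed.
Lemma RInt_pointR (f : R -> R) a : RInt f a a = 0.
Proof. exact (@RInt_point R_CompleteNormedModule a f). Qed.

Lemma RInt_ext_open (f g : R -> R) a b : a <= b ->
  (forall x, a < x < b -> f x = g x) -> RInt f a b = RInt g a b.
Proof. intros. apply (@RInt_ext R_CompleteNormedModule). rewrite Rmin_left, Rmax_right by lra. auto. Qed.
Lemma ex_RInt_ext_open (f g : R -> R) a b : a <= b ->
  (forall x, a < x < b -> f x = g x) -> ex_RInt f a b -> ex_RInt g a b.
Proof. intros Hab H. apply ex_RInt_ext. rewrite Rmin_left, Rmax_right by lra. auto. Qed.

Lemma ex_RInt_continuousR (f : R -> R) a b : (forall x, continuity_pt f x) -> ex_RInt f a b.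
Proof.
  intros H. apply (@ex_RInt_continuous R_CompleteNormedModule).
  intros z _. apply continuity_pt_filterlim. auto.
Qed.

Lemma continuity_pt_exp_comp (g : R -> R) x : derivable g -> continuity_pt (fun s => exp (g s)) x.
Proof.
  intros Hg. apply continuity_pt_comp with (f1 := g) (f2 := exp).
  - apply derivable_continuous_pt. apply Hg.
  - apply derivable_continuous_pt. apply derivable_pt_exp.
Qed.

Lemma ex_RInt_bounded (h : R -> R) a b : a <= b -> ex_RInt h a b ->
  exists M, 0 <= M /\ forall t, a <= t <= b -> Rabs (h t) <= M.
Proof.
  intros Hab H. destruct (ex_RInt_ub h a b H) as [M HM].
  exists (Rabs M). split. apply Rabs_pos. intros t Ht.
  rewrite Rmin_left, Rmax_right in HM by lra.
  apply Rle_trans with M. exact (HM t Ht). apply RRle_abs.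
Qed.

Lemma ex_RInt_reflect (h : R -> R) t : 0 <= t -> ex_RInt h 0 t -> ex_RInt (fun s => h (t - s)) 0 t.
Proof.
  intros Ht H.
  assert (H1 : ex_RInt h (-1 * 0 + t) (-1 * t + t)).
  { replace (-1 * 0 + t) with t by ring. replace (-1 * t + t) with 0 by ring.
    apply (@ex_RInt_swap R_NormedModule). auto. }
  pose proof (@ex_RInt_comp_lin R_NormedModule h (-1) t 0 t H1) as H2.
  apply ex_RInt_ext_open with (fun s => -1 * (scal (-1) (h (-1 * s + t)))). auto.
  - intros x _. unfold scal; simpl. unfold mult; simpl.
    replace (-1 * x + t) with (t - x) by ring. ring.
  - apply ex_RInt_scalR. exact H2.
Qed.

(* A uniform limit of integrable functions is integrable: enlarge the
   step-function envelope of an e-close integrable g by e. *)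
Lemma ex_RInt_uniform_limit f a b : a <= b ->
  (forall e, 0 < e -> exists g, ex_RInt g a b /\ forall t, a <= t <= b -> Rabs (f t - g t) <= e) ->
  ex_RInt f a b.
Proof.
  intros Hab H. apply ex_RInt_Reals_1. intro eps.
  assert (Hd : 0 < eps / (2 * (b - a + 1))).
  { apply Rdiv_lt_0_compat. apply cond_pos. lra. }
  destruct (constructive_indefinite_description _ (H _ Hd)) as [g [Hg Hfg]].
  pose proof (ex_RInt_Reals_0 _ _ _ Hg) as pr.
  assert (He2 : 0 < eps / 2) by (generalize (cond_pos eps); lra).
  destruct (pr (mkposreal _ He2)) as [phi [psi [H1 H2]]].
  exists phi.
  exists (mkStepFun (StepFun_P28 1 psi (mkStepFun (StepFun_P4 a b (eps / (2 * (b - a + 1))))))).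
  split.
  - intros t Ht. simpl. unfold fct_cte.
    rewrite Rmin_left in Ht by lra. rewrite Rmax_right in Ht by lra.
    specialize (H1 t). rewrite Rmin_left, Rmax_right in H1 by lra.
    specialize (H1 Ht). specialize (Hfg t Ht).
    replace (f t - phi t) with ((f t - g t) + (g t - phi t)) by ring.
    eapply Rle_trans. apply Rabs_triang. lra.
  - rewrite StepFun_P30. rewrite StepFun_P18. simpl in H2.
    eapply Rle_lt_trans. apply Rabs_triang.
    rewrite Rmult_1_l. rewrite (Rabs_right (eps / _ * _)).
    2:{ apply Rle_ge. apply Rmult_le_pos. lra. lra. }
    assert (eps / (2 * (b - a + 1)) * (b - a) <= eps / 2).
    { apply Rle_trans with (eps / 2 * ((b - a) / (b - a + 1))).
      { right. field. lra. }
      rewrite <- (Rmult_1_r (eps / 2)) at 2.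
      apply Rmult_le_compat_l. generalize (cond_pos eps); lra.
      apply Rmult_le_reg_r with (b - a + 1). lra.
      unfold Rdiv. rewrite Rmult_assoc, Rinv_l by lra. lra. }
    lra.
Qed.

(* For k nonincreasing on [a,b], {s | c <= k s} is an initial segment of
   [a,b], so h times its indicator is integrable. *)
Lemma ex_RInt_mul_level_set (h k : R -> R) a b c : a <= b -> ex_RInt h a b ->
  (forall s u, a <= s -> s <= u -> u <= b -> k u <= k s) ->
  ex_RInt (fun s => h s * (if Rle_dec c (k s) then 1 else 0)) a b.
Proof.
  intros Hab Hh Hk.
  destruct (Rle_dec c (k a)) as [Ha|Ha].
  - set (E := fun x => a <= x <= b /\ c <= k x).
    assert (HB : bound E). { exists b. intros x [Hx _]. lra. }
    assert (HE : exists x, E x). { exists a. split. lra. auto. }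
    destruct (completeness E HB HE) as [m [Hm1 Hm2]].
    assert (Ham : a <= m). { apply Hm1. split. lra. auto. }
    assert (Hmb : m <= b). { apply Hm2. intros x [Hx _]. lra. }
    apply ex_RInt_Chasles with m.
    + apply ex_RInt_ext_open with h. lra.
      * intros x Hx.
        assert (Hbeyond : exists x', E x' /\ x < x').
        { apply NNPP. intro Hn. assert (m <= x). apply Hm2. intros z Hz.
          destruct (Rle_dec z x); auto. exfalso; apply Hn. exists z; split; auto; lra. lra. }
        destruct Hbeyond as [x' [[Hx'1 Hx'2] Hx'3]].
        destruct (Rle_dec c (k x)) as [|n]. ring.
        exfalso. apply n. apply Rle_trans with (k x'); auto. apply Hk; lra.
      * apply ex_RInt_sub_l with b. lra. auto.
    + apply ex_RInt_ext_open with (fun _ => 0). lra.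
      * intros x Hx. destruct (Rle_dec c (k x)) as [Hc|]; [|ring].
        assert (x <= m) by (apply Hm1; split; [lra|auto]). lra.
      * apply ex_RInt_constR.
  - apply ex_RInt_ext_open with (fun _ => 0). lra.
    + intros x Hx. destruct (Rle_dec c (k x)) as [Hc|]; [|ring].
      exfalso. apply Ha. apply Rle_trans with (k x); auto. apply Hk; lra.
    + apply ex_RInt_constR.
Qed.

(* staircase y = #{ i in 1..M | i <= y }, i.e. the integer part of y clipped
   to [0,M]. *)
Fixpoint staircase (M : nat) (y : R) : R :=
  match M with
  | O => 0
  | S M' => staircase M' y + (if Rle_dec (INR (S M')) y then 1 else 0)
  end.

Lemma ex_RInt_mul_staircase (h k : R -> R) a b M : a <= b -> ex_RInt h a b ->
  (forall s u, a <= s -> s <= u -> u <= b -> k u <= k s) ->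
  ex_RInt (fun s => h s * staircase M (k s)) a b.
Proof.
  intros Hab Hh Hk. induction M as [|M IH].
  - apply ex_RInt_ext_open with (fun _ => 0). lra. intros; simpl; ring. apply ex_RInt_constR.
  - apply ex_RInt_ext_open with
      (fun s => h s * staircase M (k s) + h s * (if Rle_dec (INR (S M)) (k s) then 1 else 0)).
    lra. intros x _. cbn [staircase]. ring.
    apply ex_RInt_plusR. auto. apply ex_RInt_mul_level_set; auto.
Qed.

Lemma staircase_approx M y : 0 <= y <= INR M -> y - 1 <= staircase M y <= y.
Proof.
  assert (Hfull : forall M y, INR M <= y -> staircase M y = INR M).
  { induction M0 as [|M0 IH]; intros y0 H. reflexivity.
    cbn [staircase]. rewrite IH by (rewrite S_INR in H; lra).
    destruct (Rle_dec (INR (S M0)) y0) as [|n]; [rewrite S_INR; reflexivity | contradiction]. }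
  induction M as [|M IH]; intros H.
  - simpl in *. lra.
  - cbn [staircase]. rewrite S_INR in H. destruct (Rle_dec (INR M) y) as [Hy|Hy].
    + rewrite Hfull by auto. destruct (Rle_dec (INR (S M)) y); rewrite S_INR in *; lra.
    + specialize (IH ltac:(lra)). destruct (Rle_dec (INR (S M)) y); rewrite S_INR in *; lra.
Qed.

(* The product of an integrable function and a nonincreasing function with
   values in [0,1] is integrable: approximate the latter uniformly by
   staircases (1/N) staircase N (N k). *)
Lemma ex_RInt_mul_monotone (h k : R -> R) a b : a <= b -> ex_RInt h a b ->
  (forall s u, a <= s -> s <= u -> u <= b -> k u <= k s) ->
  (forall s, a <= s <= b -> 0 <= k s <= 1) ->
  ex_RInt (fun s => h s * k s) a b.
Proof.
  intros Hab Hh Hk Hk01. apply ex_RInt_uniform_limit. auto. intros e He.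
  destruct (ex_RInt_bounded h a b Hab Hh) as [M [HM0 HM]].
  destruct (INR_archimed e M He) as [N HN].
  assert (HNpos : 0 < INR N) by (apply Rmult_lt_reg_r with e; lra).
  exists (fun s => / INR N * (h s * staircase N (INR N * k s))). split.
  - apply ex_RInt_scalR. apply ex_RInt_mul_staircase; auto.
    intros s u H1 H2 H3. apply Rmult_le_compat_l. lra. apply Hk; auto.
  - intros t Ht. destruct (Hk01 t Ht) as [Hk0 Hk1].
    assert (Hc := staircase_approx N (INR N * k t) ltac:(split; nra)).
    replace (h t * k t - / INR N * (h t * staircase N (INR N * k t))) with
      (h t * / INR N * (INR N * k t - staircase N (INR N * k t))) by (field; lra).
    rewrite Rabs_mult, Rabs_mult, (Rabs_right (/ INR N))
      by (apply Rle_ge; left; apply Rinv_0_lt_compat; auto).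
    assert (Hd : Rabs (INR N * k t - staircase N (INR N * k t)) <= 1) by (apply Rabs_le; lra).
    assert (HMN : M * / INR N <= e).
    { apply Rmult_le_reg_r with (INR N). auto.
      rewrite Rmult_assoc, Rinv_l by lra. lra. }
    assert (Hh1 := HM t Ht).
    assert (0 < / INR N) by (apply Rinv_0_lt_compat; auto).
    apply Rle_trans with (M * / INR N * 1); [|lra].
    apply Rmult_le_compat; try apply Rabs_pos; try nra.
    apply Rmult_le_pos; [apply Rabs_pos|lra].
Qed.

Lemma ex_RInt_mul_monotone_bounded (h k : R -> R) a b K : a <= b -> 0 < K -> ex_RInt h a b ->
  (forall s u, a <= s -> s <= u -> u <= b -> k u <= k s) ->
  (forall s, a <= s <= b -> 0 <= k s <= K) ->
  ex_RInt (fun s => h s * k s) a b.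
Proof.
  intros Hab HK Hh Hk HkK.
  assert (HiK : 0 < / K) by (apply Rinv_0_lt_compat; auto).
  apply ex_RInt_ext_open with (fun s => K * (h s * (/ K * k s))). auto.
  { intros; field; lra. }
  apply ex_RInt_scalR. apply ex_RInt_mul_monotone; auto.
  - intros. apply Rmult_le_compat_l. lra. apply Hk; auto.
  - intros s Hs. destruct (HkK s Hs). split. nra.
    apply Rmult_le_reg_l with K. auto. rewrite <- Rmult_assoc, Rinv_r by lra. lra.
Qed.

Lemma halving_bound_nonpos (d : R -> R) (P : R -> Prop) M :
  (forall t, P t -> d t <= M) ->
  (forall c, 0 <= c -> (forall t, P t -> d t <= c) -> forall t, P t -> d t <= c / 2) ->
  forall t, P t -> d t <= 0.
Proof.
  intros HM Hhalf.
  assert (Hj : forall j t, P t -> d t <= Rabs M * (/ 2) ^ j).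
  { induction j as [|j IH]; intros t Ht.
    - simpl. rewrite Rmult_1_r. apply Rle_trans with M. auto. apply RRle_abs.
    - replace (Rabs M * (/ 2) ^ S j) with (Rabs M * (/ 2) ^ j / 2) by (simpl; field).
      apply Hhalf; auto. apply Rmult_le_pos. apply Rabs_pos. apply pow_le. lra. }
  intros t Ht. apply Rnot_lt_le. intro Hpos.
  assert (HM1 : 0 < Rabs M + 1) by (generalize (Rabs_pos M); lra).
  destruct (pow_lt_1_zero (/ 2) ltac:(rewrite Rabs_right; lra) (d t / (Rabs M + 1)))
    as [j Hj'].
  { apply Rdiv_lt_0_compat; lra. }
  specialize (Hj' j (Nat.le_refl j)). rewrite Rabs_right in Hj' by (apply Rle_ge, pow_le; lra).
  specialize (Hj j t Ht).
  assert (Hp : 0 <= (/ 2) ^ j) by (apply pow_le; lra).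
  assert (Rabs M * (/ 2) ^ j <= (Rabs M + 1) * (/ 2) ^ j) by nra.
  assert ((Rabs M + 1) * (/ 2) ^ j < d t).
  { apply Rmult_lt_compat_l with (r := Rabs M + 1) in Hj'; auto.
    unfold Rdiv in Hj'. rewrite (Rmult_comm (d t)), <- Rmult_assoc, Rinv_r in Hj' by lra. lra. }
  lra.
Qed.

(* Propagate
   d <= 0 along the intervals [n/(2K), (n+1)/(2K)], on each of which the
   convolution halves any bound. *)
Lemma renewal_comparison K f d : 0 < K ->
  (forall s, 0 <= s -> 0 <= f s <= K) ->
  (forall T, 0 <= T -> exists M, forall t, 0 <= t <= T -> d t <= M) ->
  (forall t, 0 <= t -> ex_RInt (fun s => d (t - s) * f s) 0 t) ->
  (forall t, 0 <= t -> d t <= RInt (fun s => d (t - s) * f s) 0 t) ->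
  forall t, 0 <= t -> d t <= 0.
Proof.
  intros HK Hf Hb Hi Hd.
  set (del := / (2 * K)).
  assert (Hdel : 0 < del) by (unfold del; apply Rinv_0_lt_compat; lra).
  assert (HKdel : K * del = / 2) by (unfold del; field; lra).
  assert (Hstep : forall n : nat, forall t, 0 <= t <= INR n * del -> d t <= 0).
  { induction n as [|n IH].
    - intros t Ht. simpl in Ht. replace t with 0 by lra.
      eapply Rle_trans. apply Hd. lra. rewrite RInt_pointR. lra.
    - set (tau := INR n * del).
      assert (Htau : 0 <= tau) by (unfold tau; apply Rmult_le_pos; [apply pos_INR|lra]).
      destruct (Hb (tau + del)) as [M HM]. lra.
      assert (Hnext : forall t, tau <= t <= tau + del -> d t <= 0).
      { apply (halving_bound_nonpos d _ M). intros t Ht; apply HM; lra.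
        intros c Hc Hdc t Ht.
        eapply Rle_trans. apply Hd. lra.
        assert (Hi1 : ex_RInt (fun s => d (t - s) * f s) 0 (t - tau))
          by (apply ex_RInt_sub_l with t; [lra|apply Hi; lra]).
        assert (Hi2 : ex_RInt (fun s => d (t - s) * f s) (t - tau) t)
          by (apply ex_RInt_sub_r with 0; [lra|apply Hi; lra]).
        rewrite <- (RInt_ChaslesR _ 0 (t - tau) t Hi1 Hi2).
        assert (Hrecent : RInt (fun s => d (t - s) * f s) 0 (t - tau) <= c * K * (t - tau)).
        { rewrite <- (Rminus_0_r (t - tau)) at 2. rewrite <- RInt_constR.
          apply RInt_le. lra. auto. apply ex_RInt_constR.
          intros x Hx. destruct (Hf x) as [Hf0 HfK]. lra.
          apply Rle_trans with (c * f x).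
          - apply Rmult_le_compat_r. auto. apply Hdc. lra.
          - apply Rmult_le_compat_l; auto. }
        assert (Hold : RInt (fun s => d (t - s) * f s) (t - tau) t <= 0).
        { replace 0 with (0 * (t - (t - tau))) by ring. rewrite <- RInt_constR.
          apply RInt_le. lra. auto. apply ex_RInt_constR.
          intros x Hx. destruct (Hf x) as [Hf0 HfK]. lra.
          assert (d (t - x) <= 0) by (apply IH; fold tau; lra). nra. }
        assert (c * K * (t - tau) <= c * K * del) by (apply Rmult_le_compat_l; nra).
        replace (c * K * del) with (c / 2) in * by (rewrite Rmult_assoc, HKdel; field).
        lra. }
      intros t Ht. rewrite S_INR, Rmult_plus_distr_r, Rmult_1_l in Ht. fold tau in Ht.
      destruct (Rle_dec t tau). apply IH. fold tau. lra. apply Hnext. lra. }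
  intros t Ht. destruct (INR_archimed del t Hdel) as [n Hn].
  apply (Hstep n). lra.
Qed.

Lemma exp_le_exp x y : x <= y -> exp x <= exp y.
Proof. intros. destruct (Req_dec x y). subst; lra. left; apply exp_increasing; lra. Qed.

Lemma exp_le_1 x : 0 <= x -> exp (- x) <= 1.
Proof. intros. rewrite <- exp_0. apply exp_le_exp. lra. Qed.

Section RenewalBound.

Variables (K : R) (f : R -> R).
Hypothesis HK : 0 < K.
Hypothesis Hf : forall s, 0 <= s -> 0 <= f s <= K.
Hypothesis Hmon : forall s u, 0 <= s -> s <= u -> f u <= f s.

Lemma kernel_int a b : 0 <= a -> a <= b -> ex_RInt f a b.
Proof.
  intros Ha Hab. apply ex_RInt_ext_open with (fun s => 1 * f s). auto. intros; ring.
  apply ex_RInt_mul_monotone_bounded with K;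
    [lra | lra | apply ex_RInt_constR | intros; apply Hmon; lra | intros; apply Hf; lra].
Qed.

Lemma kernel_conv_int (h : R -> R) t : 0 <= t -> ex_RInt h 0 t ->
  ex_RInt (fun s => h (t - s) * f s) 0 t.
Proof.
  intros Ht Hh. apply ex_RInt_mul_monotone_bounded with K;
    [lra | lra | apply ex_RInt_reflect; auto | intros; apply Hmon; lra | intros; apply Hf; lra].
Qed.

Lemma kernel_exp_int c t a b : 0 <= a -> a <= b ->
  ex_RInt (fun s => exp (c * (s - t)) * f s) a b.
Proof.
  intros Ha Hab. apply ex_RInt_mul_monotone_bounded with K;
    [lra | lra | | intros; apply Hmon; lra | intros; apply Hf; lra].
  apply ex_RInt_continuousR. intro x. apply continuity_pt_exp_comp. reg.
Qed.

Lemma kernel_mass_le T : 0 <= T -> RInt f 0 T <= K * T.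
Proof.
  intros HT. replace (K * T) with (K * (T - 0)) by ring. rewrite <- RInt_constR.
  apply RInt_le; auto. apply kernel_int; lra. apply ex_RInt_constR. intros; apply Hf; lra.
Qed.

(* Once the kernel has mass above 1/2 on [0,t], the smoothed kernel with rate
   20 K carries at least 3/2 exp (-20 K t): a quarter of the mass lies after
   1/(4K), where the weight is at least exp (5 - 20 K t). *)
Lemma smoothed_kernel_lower_early t : 0 <= t -> / 2 < RInt f 0 t ->
  3 / 2 * exp (- (20 * K) * t) <= RInt (fun s => exp (20 * K * (s - t)) * f s) 0 t.
Proof.
  intros Ht HF.
  set (c := 20 * K). set (t0 := / (4 * K)).
  assert (Ht0 : 0 < t0) by (unfold t0; apply Rinv_0_lt_compat; lra).
  assert (HF0 : RInt f 0 t0 <= / 4).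
  { apply Rle_trans with (K * t0). apply kernel_mass_le; lra. right; unfold t0; field; lra. }
  assert (Ht0t : t0 < t).
  { apply Rnot_le_lt. intro Hc. assert (RInt f 0 t <= K * t) by (apply kernel_mass_le; lra).
    assert (K * t <= K * t0) by (apply Rmult_le_compat_l; lra).
    replace (K * t0) with (/ 4) in * by (unfold t0; field; lra). lra. }
  assert (Hlate : / 4 <= RInt f t0 t).
  { rewrite <- (RInt_ChaslesR f 0 t0 t) in HF by (apply kernel_int; lra). lra. }
  assert (Hsplit : RInt (fun s => exp (c * (s - t)) * f s) 0 t0
                   + RInt (fun s => exp (c * (s - t)) * f s) t0 t
                   = RInt (fun s => exp (c * (s - t)) * f s) 0 t)
    by (apply RInt_ChaslesR; apply kernel_exp_int; lra).
  assert (Hearly : 0 <= RInt (fun s => exp (c * (s - t)) * f s) 0 t0).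
  { apply RInt_ge_0; try lra. apply kernel_exp_int; lra.
    intros x Hx. apply Rmult_le_pos. left; apply exp_pos. apply Hf; lra. }
  assert (Hweight : exp (c * (t0 - t)) * RInt f t0 t
                    <= RInt (fun s => exp (c * (s - t)) * f s) t0 t).
  { rewrite <- RInt_scalR by (apply kernel_int; lra).
    apply RInt_le. lra. apply ex_RInt_scalR; apply kernel_int; lra. apply kernel_exp_int; lra.
    intros x Hx. apply Rmult_le_compat_r. apply Hf; lra.
    apply exp_le_exp. assert (c * t0 <= c * x) by (apply Rmult_le_compat_l; unfold c; lra). lra. }
  assert (He5 : 6 <= exp (c * t0)).
  { replace (c * t0) with 5 by (unfold c, t0; field; lra). pose proof (exp_ineq1_le 5). lra. }
  assert (Hexp : exp (c * (t0 - t)) = exp (- c * t) * exp (c * t0))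
    by (rewrite <- exp_plus; f_equal; ring).
  rewrite Hexp in Hweight.
  assert (HE : 0 < exp (- c * t)) by apply exp_pos.
  assert (exp (- c * t) * 6 * / 4 <= exp (- c * t) * exp (c * t0) * RInt f t0 t).
  { apply Rmult_le_compat; try lra. apply Rmult_le_compat_l; lra. }
  lra.
Qed.

(* Near t the smoothing weight exceeds 1/3 on a window of length 1/c, on
   which f >= f t. *)
Lemma smoothed_kernel_lower_recent c t : 0 < c -> / c <= t ->
  f t / 3 * / c <= RInt (fun s => exp (c * (s - t)) * f s) 0 t.
Proof.
  intros Hc Ht. set (t1 := t - / c).
  assert (Hic : 0 < / c) by (apply Rinv_0_lt_compat; lra).
  rewrite <- (RInt_ChaslesR _ 0 t1 t) by (apply kernel_exp_int; unfold t1; lra).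
  assert (0 <= RInt (fun s => exp (c * (s - t)) * f s) 0 t1).
  { apply RInt_ge_0. unfold t1; lra. apply kernel_exp_int; unfold t1; lra.
    intros x Hx. apply Rmult_le_pos. left; apply exp_pos. apply Hf; lra. }
  assert (f t / 3 * (t - t1) <= RInt (fun s => exp (c * (s - t)) * f s) t1 t).
  { rewrite <- RInt_constR. apply RInt_le. unfold t1; lra. apply ex_RInt_constR.
    apply kernel_exp_int; unfold t1; lra.
    intros x Hx. unfold t1 in Hx.
    assert (Hex : / 3 <= exp (c * (x - t))).
    { apply Rle_trans with (/ exp 1).
      - apply Rinv_le_contravar. apply exp_pos. apply exp_le_3.
      - rewrite <- exp_Ropp. apply exp_le_exp.
        assert (c * (t - x) <= c * / c) by (apply Rmult_le_compat_l; lra).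
        rewrite Rinv_r in H0 by lra. lra. }
    assert (f t <= f x) by (apply Hmon; lra).
    assert (0 <= f t) by (apply Hf; lra).
    unfold Rdiv. rewrite Rmult_comm. apply Rmult_le_compat; lra. }
  replace (t - t1) with (/ c) in * by (unfold t1; ring). lra.
Qed.

Hypothesis Hmass : forall T, 0 <= T -> RInt f 0 T <= 1.

Definition renewal_supersolution (u : R) : R := 362 * K - 180 * K * exp (- (20 * K) * u).

Lemma renewal_supersolution_spec t : 0 <= t ->
  f t + RInt (fun s => renewal_supersolution (t - s) * f s) 0 t <= renewal_supersolution t.
Proof.
  intros Ht. set (c := 20 * K).
  set (F := RInt f 0 t). set (I := RInt (fun s => exp (c * (s - t)) * f s) 0 t).
  assert (Hconv : RInt (fun s => renewal_supersolution (t - s) * f s) 0 t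
                  = 362 * K * F - 180 * K * I).
  { rewrite (RInt_ext_open _ (fun s => 362 * K * f s - 180 * K * (exp (c * (s - t)) * f s)))
      by (auto; intros; unfold renewal_supersolution, c;
          replace (- (20 * K) * (t - x)) with (20 * K * (x - t)) by ring; ring).
    assert (H1 : ex_RInt f 0 t) by (apply kernel_int; lra).
    assert (H2 : ex_RInt (fun s => exp (c * (s - t)) * f s) 0 t) by (apply kernel_exp_int; lra).
    rewrite RInt_minusR, RInt_scalR, RInt_scalR; auto; apply ex_RInt_scalR; auto. }
  rewrite Hconv. unfold renewal_supersolution. fold c.
  assert (HF1 : F <= 1) by (apply Hmass; auto).
  assert (HI0 : 0 <= I).
  { apply RInt_ge_0; auto. apply kernel_exp_int; lra.
    intros x Hx. apply Rmult_le_pos. left; apply exp_pos. apply Hf; lra. }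
  assert (Hect : exp (- c * t) <= 1).
  { replace (- c * t) with (- (c * t)) by ring. apply exp_le_1. unfold c; nra. }
  assert (Hect0 : 0 < exp (- c * t)) by apply exp_pos.
  destruct (Hf t Ht) as [Hft0 HftK].
  destruct (Rle_lt_dec F (/ 2)) as [Hle|Hgt].
  - assert (K * F <= K * / 2) by (apply Rmult_le_compat_l; lra).
    assert (0 <= K * I) by (apply Rmult_le_pos; lra).
    assert (K * exp (- c * t) <= K * 1) by (apply Rmult_le_compat_l; lra).
    lra.
  - assert (Hearly : 3 / 2 * exp (- c * t) <= I) by (apply smoothed_kernel_lower_early; [lra | exact Hgt]).
    assert (Htc : / c <= t).
    { apply Rnot_lt_le. intro Hlt. assert (F <= K * t) by (apply kernel_mass_le; lra).
      assert (K * t <= K * / c) by (apply Rmult_le_compat_l; lra).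
      replace (K * / c) with (/ 20) in * by (unfold c; field; lra). lra. }
    assert (Hrecent : f t / 3 * / c <= I) by (apply smoothed_kernel_lower_recent; [unfold c; lra | exact Htc]).
    replace (f t / 3 * / c) with (f t / (60 * K)) in Hrecent by (unfold c; field; lra).
    assert (f t <= 60 * K * I).
    { apply Rmult_le_compat_l with (r := 60 * K) in Hrecent; [|lra].
      replace (60 * K * (f t / (60 * K))) with (f t) in Hrecent by (field; lra). lra. }
    assert (K * F <= K * 1) by (apply Rmult_le_compat_l; lra).
    nra.
Qed.

Lemma renewal_bound (g : R -> R) :
  (forall T, 0 <= T -> ex_RInt g 0 T) ->
  (forall t, 0 <= t -> g t = f t + RInt (fun s => g (t - s) * f s) 0 t) ->
  forall t, 0 <= t -> g t <= 362 * K.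
Proof.
  intros Hg Heq.
  set (d := fun u => g u - renewal_supersolution u).
  assert (Hsup_int : forall T, ex_RInt renewal_supersolution 0 T).
  { intro T. apply ex_RInt_minusR. apply ex_RInt_constR. apply ex_RInt_scalR.
    apply ex_RInt_continuousR. intro x. apply continuity_pt_exp_comp. reg. }
  assert (Hexp_pos : forall u, 0 < 180 * K * exp (- (20 * K) * u))
    by (intro u; assert (0 < exp (- (20 * K) * u)) by apply exp_pos; nra).
  assert (Hd : forall t, 0 <= t -> d t <= 0).
  { apply (renewal_comparison K f d HK Hf).
    - intros T HT. destruct (ex_RInt_bounded g 0 T HT (Hg T HT)) as [M [HM0 HM]].
      exists (M - 182 * K). intros t Ht. unfold d, renewal_supersolution.
      assert (g t <= M) by (eapply Rle_trans; [apply RRle_abs | apply HM; auto]).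
      assert (exp (- (20 * K) * t) <= 1).
      { replace (- (20 * K) * t) with (- (20 * K * t)) by ring. apply exp_le_1. nra. }
      nra.
    - intros t Ht. apply kernel_conv_int; auto. apply ex_RInt_minusR; auto.
    - intros t Ht. unfold d at 1. rewrite Heq by auto.
      pose proof (renewal_supersolution_spec t Ht).
      rewrite (RInt_ext_open (fun s => d (t - s) * f s)
                 (fun s => g (t - s) * f s - renewal_supersolution (t - s) * f s))
        by (auto; intros; unfold d; ring).
      rewrite RInt_minusR by (apply kernel_conv_int; auto). lra. }
  intros t Ht. specialize (Hd t Ht). specialize (Hexp_pos t).
  unfold d, renewal_supersolution in Hd. lra.
Qed.

End RenewalBound.

Lemma ex_RInt_mul_tail (h Lb : R -> R) a b : 0 <= a -> a <= b ->
  (forall x, continuity_pt h x) -> prob_tail Lb -> ex_RInt (fun s => h s * Lb s) a b.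
Proof.
  intros Ha Hab Hc [HL1 [HL2 _]]. apply ex_RInt_mul_monotone. auto.
  apply ex_RInt_continuousR. auto. intros; apply HL2; lra. intros; apply HL1; lra.
Qed.

Lemma ex_RInt_tail Lb a b : 0 <= a -> a <= b -> prob_tail Lb -> ex_RInt Lb a b.
Proof.
  intros. apply ex_RInt_ext_open with (fun s => (fun _ => 1) s * Lb s). auto. intros; ring.
  apply ex_RInt_mul_tail; auto. intros; apply continuity_pt_const. unfold constant; auto.
Qed.

Lemma ex_RInt_moment_tail Lb a b : 0 <= a -> a <= b -> prob_tail Lb ->
  ex_RInt (fun s => s * Lb s) a b.
Proof. intros. apply ex_RInt_mul_tail with (h := fun s => s); auto. intros; apply continuity_pt_id. Qed.

Lemma ex_RInt_laplace_tail r Lb a b : 0 <= a -> a <= b -> prob_tail Lb ->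
  ex_RInt (fun s => exp (- (r * s)) * Lb s) a b.
Proof.
  intros. apply ex_RInt_mul_tail with (h := fun s => exp (- (r * s))); auto.
  intro x. apply continuity_pt_exp_comp. reg.
Qed.

(* Exponential tilting: if R solves R = K Lb + K Lb * R, then
   g(u) = exp(-r u) R(u) solves the renewal equation with kernel
   exp(-r s) K Lb(s), which is nonincreasing with values in [0,K].  If that
   kernel has mass at most 1, the renewal bound applies. *)
Lemma tilted_renewal_bound (K r : R) (Lb Rs : R -> R) : 0 < K -> 0 <= r -> prob_tail Lb ->
  (forall T, 0 <= T -> ex_RInt Rs 0 T) ->
  (forall t, 0 <= t -> Rs t = K * Lb t + K * RI (fun s => Rs (t - s) * Lb s) 0 t) ->
  (forall T, 0 <= T -> K * RInt (fun s => exp (- (r * s)) * Lb s) 0 T <= 1) ->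
  forall u, 0 <= u -> exp (- (r * u)) * Rs u <= 362 * K.
Proof.
  intros HK Hr HLb HRs HRe Hmass.
  pose proof HLb as [HL1 [HL2 _]].
  set (f := fun s => exp (- (r * s)) * (K * Lb s)).
  apply (renewal_bound K f HK).
  - intros s Hs. unfold f. destruct (HL1 s Hs).
    assert (exp (- (r * s)) <= 1) by (apply exp_le_1; nra).
    assert (0 < exp (- (r * s))) by apply exp_pos.
    assert (0 <= K * Lb s <= K) by (split; nra).
    split; nra.
  - intros s u Hs Hsu. unfold f. destruct (HL1 s Hs). destruct (HL1 u) as [Hu0 Hu1]. lra.
    assert (exp (- (r * u)) <= exp (- (r * s))) by (apply exp_le_exp; nra).
    assert (Lb u <= Lb s) by (apply HL2; auto).
    assert (0 < exp (- (r * u))) by apply exp_pos.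
    apply Rmult_le_compat; nra.
  - intros T HT. unfold f. rewrite <- (Hmass T HT), <- RInt_scalR.
    + right. apply RInt_ext_open. auto. intros; ring.
    + apply ex_RInt_laplace_tail; auto; lra.
  - intros T HT. apply ex_RInt_ext_open with (fun s => Rs s * exp (- (r * s))). auto. intros; ring.
    apply ex_RInt_mul_monotone. auto. apply HRs; auto.
    + intros s u H1 H2 H3. apply exp_le_exp. nra.
    + intros s Hs. split. left; apply exp_pos. apply exp_le_1. nra.
  - intros t Ht. rewrite HRe by auto.
    assert (Hi : ex_RInt (fun s => Rs (t - s) * Lb s) 0 t).
    { apply ex_RInt_mul_monotone. auto. apply ex_RInt_reflect; auto.
      intros; apply HL2; lra. intros; apply HL1; lra. }
    rewrite RI_RInt by auto.
    rewrite (RInt_ext_open (fun s => exp (- (r * (t - s))) * Rs (t - s) * f s)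
               (fun s => exp (- (r * t)) * K * (Rs (t - s) * Lb s))).
    + rewrite (RInt_scalR (fun s => Rs (t - s) * Lb s) 0 t (exp (- (r * t)) * K)) by auto.
      unfold f. ring.
    + auto.
    + intros x Hx. unfold f.
      replace (exp (- (r * t))) with (exp (- (r * (t - x))) * exp (- (r * x)))
        by (rewrite <- exp_plus; f_equal; ring).
      ring.
Qed.

Lemma ImpInt_partial_le (h : R -> R) l : ImpInt h l -> (forall s, 0 <= s -> 0 <= h s) ->
  forall T, 0 <= T -> RInt h 0 T <= l.
Proof.
  intros [Hi Hl] Hp T HT.
  assert (Hex : forall T, 0 <= T -> ex_RInt h 0 T) by (intros; apply ex_RInt_of_Riemann; auto).
  apply Rnot_lt_le. intro Hc.
  destruct (Hl (RInt h 0 T - l)) as [M HM]. lra.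
  assert (HTM : 0 <= Rmax M T) by (apply Rle_trans with T; auto; apply Rmax_r).
  specialize (HM (Rmax M T) (Rmax_l _ _)). rewrite RI_RInt in HM by auto.
  assert (RInt h 0 T <= RInt h 0 (Rmax M T)).
  { rewrite <- (RInt_ChaslesR h 0 T (Rmax M T)).
    - assert (0 <= RInt h T (Rmax M T)); [|lra].
      apply RInt_ge_0. apply Rmax_r. apply ex_RInt_sub_r with 0. split; auto; apply Rmax_r. auto.
      intros; apply Hp; lra.
    - apply ex_RInt_sub_l with (Rmax M T). split; auto; apply Rmax_r. auto.
    - apply ex_RInt_sub_r with 0. split; auto; apply Rmax_r. auto. }
  apply Rabs_def2 in HM. lra.
Qed.

Lemma ImpInt_partial_ge (h : R -> R) l : ImpInt h l ->
  forall e, 0 < e -> exists M, 0 <= M /\ forall T, M <= T -> l - e < RInt h 0 T.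
Proof.
  intros [Hi Hl] e He. destruct (Hl e He) as [M HM]. exists (Rmax M 0). split. apply Rmax_r.
  intros T HT. specialize (HM T (Rle_trans _ _ _ (Rmax_l _ _) HT)).
  rewrite RI_RInt in HM. apply Rabs_def2 in HM. lra.
  apply ex_RInt_of_Riemann, Hi. apply Rle_trans with (Rmax M 0); auto; apply Rmax_r.
Qed.

(* Second-order bound on exp(-x), from 1 + x <= exp x. *)
Lemma exp_neg_le_quadratic x : 0 <= x -> exp (- x) <= 1 - x + x * x.
Proof.
  intros Hx. rewrite exp_Ropp.
  assert (H1 : 1 + x <= exp x) by apply exp_ineq1_le.
  assert (He : 0 < exp x) by apply exp_pos.
  apply Rmult_le_reg_l with (exp x). auto. rewrite Rinv_r by lra.
  assert ((1 + x) * (1 - x + x * x) <= exp x * (1 - x + x * x)) by (apply Rmult_le_compat_r; nra).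
  nra.
Qed.

(* Laplace transform of a tail function up to T: on [0,S] use
   exp(-r s) <= 1 - r s + r^2 S s, on [S,T] use exp(-r s) <= 1. *)
Lemma laplace_tail_split (Lb : R -> R) r S T : prob_tail Lb -> 0 <= r -> 0 <= S <= T ->
  RInt (fun s => exp (- (r * s)) * Lb s) 0 T
  <= RInt Lb 0 T - r * RInt (fun s => s * Lb s) 0 S + r * r * S * RInt (fun s => s * Lb s) 0 S.
Proof.
  intros HLb Hr HST. pose proof HLb as [HL1 _].
  assert (HiQ : ex_RInt (fun s => s * Lb s) 0 S) by (apply ex_RInt_moment_tail; auto; lra).
  assert (HiL : ex_RInt Lb 0 S) by (apply ex_RInt_tail; auto; lra).
  rewrite <- (RInt_ChaslesR _ 0 S T) by (apply ex_RInt_laplace_tail; auto; lra).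
  rewrite <- (RInt_ChaslesR Lb 0 S T) by (apply ex_RInt_tail; auto; lra).
  assert (Hhead : RInt (fun s => exp (- (r * s)) * Lb s) 0 S
                  <= RInt Lb 0 S - r * RInt (fun s => s * Lb s) 0 S
                     + r * r * S * RInt (fun s => s * Lb s) 0 S).
  { set (Q := fun s => s * Lb s).
    assert (Hi1 : ex_RInt (fun s => r * Q s) 0 S) by (apply ex_RInt_scalR; exact HiQ).
    assert (Hi2 : ex_RInt (fun s => r * r * S * Q s) 0 S) by (apply ex_RInt_scalR; exact HiQ).
    assert (Hi3 : ex_RInt (fun s => Lb s - r * Q s) 0 S) by (apply ex_RInt_minusR; auto).
    assert (Hcomb : RInt (fun s => (Lb s - r * Q s) + r * r * S * Q s) 0 S
                    = RInt Lb 0 S - r * RInt Q 0 S + r * r * S * RInt Q 0 S).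
    { rewrite (RInt_plusR _ _ 0 S Hi3 Hi2), (RInt_minusR _ _ 0 S HiL Hi1).
      rewrite (RInt_scalR Q 0 S r HiQ), (RInt_scalR Q 0 S (r * r * S) HiQ). reflexivity. }
    rewrite <- Hcomb.
    apply RInt_le. lra. apply ex_RInt_laplace_tail; auto; lra. apply ex_RInt_plusR; auto.
    intros x Hx. destruct (HL1 x) as [H0 H1]. lra.
    assert (Hq := exp_neg_le_quadratic (r * x) ltac:(nra)).
    assert (r * x * (r * x) <= r * r * S * x).
    { replace (r * x * (r * x)) with ((r * r * x) * x) by ring.
      replace (r * r * S * x) with ((r * r * x) * S) by ring.
      apply Rmult_le_compat_l. apply Rmult_le_pos. nra. lra. lra. }
    assert (exp (- (r * x)) * Lb x <= (1 - r * x + r * r * S * x) * Lb x)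
      by (apply Rmult_le_compat_r; lra).
    unfold Q. lra. }
  assert (Htail : RInt (fun s => exp (- (r * s)) * Lb s) S T <= RInt Lb S T).
  { apply RInt_le. lra. apply ex_RInt_laplace_tail; auto; lra. apply ex_RInt_tail; auto; lra.
    intros x Hx. destruct (HL1 x) as [H0 H1]. lra.
    assert (exp (- (r * x)) <= 1) by (apply exp_le_1; nra). nra. }
  lra.
Qed.

Lemma laplace_tail_bound (Lb : R -> R) (r eta sig S tau : R) : prob_tail Lb -> 0 <= r -> 0 <= S ->
  ImpInt Lb eta -> ImpInt (fun t => t * Lb t) sig ->
  (forall T, S <= T -> RInt (fun s => s * Lb s) S T <= tau) ->
  forall T, 0 <= T ->
  RInt (fun s => exp (- (r * s)) * Lb s) 0 T <= eta - r * sig + r * r * S * sig + r * tau.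
Proof.
  intros HLb Hr HS Heta Hsig Htau T HT. pose proof HLb as [HL1 _].
  assert (Hmoment_pos : forall s, 0 <= s -> 0 <= s * Lb s) by (intros s Hs; destruct (HL1 s Hs); nra).
  apply Rle_plus_epsilon. intros e He.
  set (e' := e / (r + 1)).
  assert (He' : 0 < e') by (unfold e'; apply Rdiv_lt_0_compat; lra).
  destruct (ImpInt_partial_ge _ _ Hsig e' He') as [M [HM0 HM]].
  set (T' := Rmax T (Rmax S M)).
  assert (HT'T : T <= T') by apply Rmax_l.
  assert (HT'S : S <= T') by (unfold T'; eapply Rle_trans; [apply Rmax_l | apply Rmax_r]).
  assert (HT'M : M <= T') by (unfold T'; eapply Rle_trans; [apply Rmax_r | apply Rmax_r]).
  assert (Hmono : RInt (fun s => exp (- (r * s)) * Lb s) 0 T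
                  <= RInt (fun s => exp (- (r * s)) * Lb s) 0 T').
  { rewrite <- (RInt_ChaslesR _ 0 T T') by (apply ex_RInt_laplace_tail; auto; lra).
    assert (0 <= RInt (fun s => exp (- (r * s)) * Lb s) T T'); [|lra].
    apply RInt_ge_0. auto. apply ex_RInt_laplace_tail; auto; lra.
    intros x Hx. apply Rmult_le_pos. left; apply exp_pos. apply HL1; lra. }
  assert (Hsplit := laplace_tail_split Lb r S T' HLb Hr (conj HS HT'S)).
  assert (HL : RInt Lb 0 T' <= eta) by (apply ImpInt_partial_le; auto; try lra; intros; apply HL1; auto).
  assert (HQ1 : sig - e' < RInt (fun s => s * Lb s) 0 T') by (apply HM; auto).
  assert (HQ2 : RInt (fun s => s * Lb s) 0 S <= sig)
    by (apply (ImpInt_partial_le (fun t => t * Lb t)); auto).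
  assert (HQ3 : RInt (fun s => s * Lb s) S T' <= tau) by (apply Htau; auto).
  assert (HQs : RInt (fun s => s * Lb s) 0 S + RInt (fun s => s * Lb s) S T'
                = RInt (fun s => s * Lb s) 0 T')
    by (apply RInt_ChaslesR; apply ex_RInt_moment_tail; auto; lra).
  assert (r * r * S * RInt (fun s => s * Lb s) 0 S <= r * r * S * sig)
    by (apply Rmult_le_compat_l; [repeat apply Rmult_le_pos; lra | lra]).
  assert (r * (sig - e') <= r * RInt (fun s => s * Lb s) 0 T') by (apply Rmult_le_compat_l; lra).
  assert (r * RInt (fun s => s * Lb s) S T' <= r * tau) by (apply Rmult_le_compat_l; lra).
  assert (r * RInt (fun s => s * Lb s) 0 S
          = r * RInt (fun s => s * Lb s) 0 T' - r * RInt (fun s => s * Lb s) S T')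
    by (rewrite <- HQs; ring).
  assert (r * e' <= e).
  { apply Rle_trans with ((r + 1) * e'). apply Rmult_le_compat_r; lra.
    right. unfold e'. field. lra. }
  lra.
Qed.

Lemma uniform_first_moment_tail (alpha C0 l : R) (Ls : R -> R) (Lbn : nat -> R -> R) :
  1 < alpha -> 0 < C0 -> prob_tail Ls ->
  ImpInt (fun t => 2 * alpha * Rpower t (2 * alpha - 1) * Ls t) l ->
  (forall n, (1 <= n)%nat -> prob_tail (Lbn n)) ->
  (forall n, (1 <= n)%nat -> forall t, 0 <= t -> Lbn n t <= C0 * Ls t) ->
  forall e, 0 < e -> exists S, 0 <= S /\ forall n, (1 <= n)%nat -> forall T, S <= T ->
    RInt (fun s => s * Lbn n s) S T <= e.
Proof.
  intros Ha HC0 HLs [Hi Hl] HLb Hdom e He.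
  set (H := fun t => 2 * alpha * Rpower t (2 * alpha - 1) * Ls t).
  assert (HexH : forall T, 0 <= T -> ex_RInt H 0 T) by (intros; apply ex_RInt_of_Riemann; auto).
  set (e' := e / (2 * C0)).
  assert (He' : 0 < e') by (unfold e'; apply Rdiv_lt_0_compat; lra).
  destruct (Hl e' He') as [M HM].
  exists (Rmax M 1). split. apply Rle_trans with 1; [lra | apply Rmax_r].
  intros n Hn T HT.
  set (S := Rmax M 1) in *.
  assert (HS1 : 1 <= S) by apply Rmax_r.
  assert (HSM : M <= S) by apply Rmax_l.
  destruct (HLb n Hn) as [HL1 _].
  destruct HLs as [HLs1 _].
  assert (HIT := HM T ltac:(lra)). assert (HIS := HM S HSM).
  rewrite RI_RInt in HIT by (apply HexH; lra).
  rewrite RI_RInt in HIS by (apply HexH; lra).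
  apply Rabs_def2 in HIT. apply Rabs_def2 in HIS.
  assert (HCh : RInt H 0 S + RInt H S T = RInt H 0 T).
  { apply RInt_ChaslesR. apply HexH; lra. apply ex_RInt_sub_r with 0. lra. apply HexH; lra. }
  assert (HexST : ex_RInt H S T) by (apply ex_RInt_sub_r with 0; [lra | apply HexH; lra]).
  apply Rle_trans with (RInt (fun s => C0 / (2 * alpha) * H s) S T).
  - apply RInt_le. auto. apply ex_RInt_moment_tail; auto; lra. apply ex_RInt_scalR. auto.
    intros x Hx.
    assert (Hx0 : 0 < x) by lra.
    assert (Hpx : x <= Rpower x (2 * alpha - 1)).
    { rewrite <- (Rpower_1 x) at 1 by auto. apply Rle_Rpower; lra. }
    assert (Hb := HL1 x ltac:(lra)). assert (Hb2 := HLs1 x ltac:(lra)).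
    assert (Hd := Hdom n Hn x ltac:(lra)).
    unfold H. replace (C0 / (2 * alpha) * (2 * alpha * Rpower x (2 * alpha - 1) * Ls x))
      with (Rpower x (2 * alpha - 1) * (C0 * Ls x)) by (field; lra).
    apply Rmult_le_compat; lra.
  - rewrite RInt_scalR by auto.
    assert (RInt H S T <= 2 * e') by (unfold H in *; lra).
    apply Rle_trans with (C0 / (2 * alpha) * (2 * e')).
    + apply Rmult_le_compat_l. apply Rdiv_le_0_compat; lra. auto.
    + unfold e'. replace (C0 / (2 * alpha) * (2 * (e / (2 * C0)))) with (e / (2 * alpha)) by (field; lra).
      apply Rmult_le_reg_r with (2 * alpha). lra.
      unfold Rdiv. rewrite Rmult_assoc, Rinv_l by lra. nra.
Qed.

Lemma cv_const c : Un_cv (fun _ => c) c.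
Proof. intros e He. exists O. intros. unfold Rdist. rewrite Rminus_diag, Rabs_R0. lra. Qed.

Lemma cv_ext_eventually (u v : nat -> R) l :
  (exists N, forall n, (N <= n)%nat -> u n = v n) -> Un_cv u l -> Un_cv v l.
Proof.
  intros [N HN] Hu e He. destruct (Hu e He) as [N' HN']. exists (Nat.max N N').
  intros n Hn. rewrite <- HN by lia. apply HN'. lia.
Qed.

Lemma cv_eventually_lt (u : nat -> R) l c : Un_cv u l -> l < c ->
  exists N, forall n, (N <= n)%nat -> u n < c.
Proof.
  intros Hu Hc. destruct (Hu (c - l) ltac:(lra)) as [N HN]. exists N. intros n Hn.
  specialize (HN n ltac:(lia)). unfold Rdist in HN. apply Rabs_def2 in HN. lra.
Qed.

Lemma cv_eventually_gt (u : nat -> R) l c : Un_cv u l -> c < l ->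
  exists N, forall n, (N <= n)%nat -> c < u n.
Proof.
  intros Hu Hc. destruct (Hu (l - c) ltac:(lra)) as [N HN]. exists N. intros n Hn.
  specialize (HN n ltac:(lia)). unfold Rdist in HN. apply Rabs_def2 in HN. lra.
Qed.

Lemma cv_infty_eventually_pos (gam : nat -> R) : cv_infty gam ->
  exists N, forall n, (N <= n)%nat -> 0 < gam n.
Proof. intros Hg. destruct (Hg 0) as [N HN]. exists N. intros n Hn. apply HN. lia. Qed.

Lemma cv_one_of_scaled_defect (gam x : nat -> R) L : cv_infty gam ->
  Un_cv (fun n => gam n * (1 - x n)) L -> Un_cv x 1.
Proof.
  intros Hg Hx.
  assert (Hdefect : Un_cv (fun n => 1 - (gam n * (1 - x n)) * / gam n) (1 - L * 0))
    by exact (CV_minus _ _ _ _ (cv_const 1) (CV_mult _ _ _ _ Hx (cv_infty_cv_0 _ Hg))).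
  replace (1 - L * 0) with 1 in Hdefect by ring.
  apply cv_ext_eventually with (2 := Hdefect).
  destruct (cv_infty_eventually_pos gam Hg) as [N HN]. exists N. intros n Hn.
  specialize (HN n Hn). field. lra.
Qed.

Lemma critical_drift_limit (gam lam eta m : nat -> R) (b mlim : R) : cv_infty gam ->
  Un_cv (fun n => gam n * (1 - lam n * eta n)) b ->
  Un_cv (fun n => gam n * (1 - m n)) mlim ->
  Un_cv (fun n => gam n * (lam n * m n * eta n - 1)) (- (b + mlim)).
Proof.
  intros Hg Hb Hm.
  pose proof (CV_minus _ _ _ _
                (CV_opp _ _ (CV_mult _ _ _ _ Hb (cv_one_of_scaled_defect gam m mlim Hg Hm))) Hm)
    as H.
  replace (- (b * 1) - mlim) with (- (b + mlim)) in H by ring.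
  apply cv_ext_eventually with (2 := H). exists O. intros n _. unfold opp_seq. ring.
Qed.

(* With r_n = beta / gam_n, if
   gam_n (K_n eta_n - 1) -> Z < beta K sig, there is a slack del > 0 such
   that, for every cutoff S, eventually
   K_n (eta_n - r_n sig_n + r_n^2 S sig_n + r_n del) <= 1: after multiplying
   by gam_n the left side minus 1 tends to Z - beta K sig + beta K del. *)
Lemma eventually_subcritical (gam K eta sig : nat -> R) (Kl sigL Z beta : R) :
  cv_infty gam -> Un_cv K Kl -> Un_cv sig sigL ->
  Un_cv (fun n => gam n * (K n * eta n - 1)) Z -> 0 <= beta -> Z < beta * Kl * sigL ->
  exists del, 0 < del /\ forall S, exists N, forall n, (N <= n)%nat ->
    K n * (eta n - beta / gam n * sig n + beta / gam n * (beta / gam n) * S * sig n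
           + beta / gam n * del) <= 1.
Proof.
  intros Hg HK Hsig HZ Hbeta HZlt.
  set (D := beta * Kl * sigL - Z). set (Kmax := Rabs Kl + 1).
  assert (HD : 0 < D) by (unfold D; lra).
  assert (HKmax : 0 < Kmax) by (unfold Kmax; generalize (Rabs_pos Kl); lra).
  set (del := D / (2 * (beta * Kmax + 1))).
  assert (Hdel : 0 < del) by (unfold del; apply Rdiv_lt_0_compat; nra).
  exists del. split; auto. intros S.
  assert (Hr : Un_cv (fun n => beta / gam n) (beta * 0))
    by exact (CV_mult _ _ _ _ (cv_const beta) (cv_infty_cv_0 _ Hg)).
  pose proof (CV_plus _ _ _ _
     (CV_minus _ _ _ _ HZ (CV_mult _ _ _ _ (cv_const beta) (CV_mult _ _ _ _ HK Hsig)))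
     (CV_mult _ _ _ _ (cv_const (beta * S)) (CV_mult _ _ _ _ (CV_mult _ _ _ _ HK Hr) Hsig)))
    as Hu.
  cbv beta in Hu.
  destruct (cv_eventually_lt _ _ (- D / 2) Hu) as [N1 HN1].
  { unfold D. lra. }
  destruct (cv_eventually_lt _ _ Kmax HK) as [N2 HN2].
  { unfold Kmax. generalize (RRle_abs Kl). lra. }
  destruct (cv_infty_eventually_pos gam Hg) as [N3 HN3].
  exists (Nat.max N1 (Nat.max N2 N3)). intros n Hn.
  specialize (HN1 n ltac:(lia)). specialize (HN2 n ltac:(lia)). specialize (HN3 n ltac:(lia)).
  assert (Hslack : beta * K n * del <= D / 2).
  { apply Rle_trans with (beta * Kmax * del).
    - assert (0 <= beta * del) by nra. nra.
    - apply Rle_trans with ((beta * Kmax + 1) * del). nra.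
      right. unfold del. field. nra. }
  assert (Hneg : gam n * (K n * (eta n - beta / gam n * sig n
                   + beta / gam n * (beta / gam n) * S * sig n + beta / gam n * del) - 1) < 0).
  { replace (gam n * (K n * (eta n - beta / gam n * sig n
               + beta / gam n * (beta / gam n) * S * sig n + beta / gam n * del) - 1))
      with (gam n * (K n * eta n - 1) - beta * (K n * sig n)
            + beta * S * (K n * (beta / gam n) * sig n) + beta * K n * del)
      by (field; lra).
    lra. }
  apply Rlt_le. apply Rmult_lt_reg_l with (gam n). auto. lra.
Qed.

Lemma fsum_scal c k f : c * fsum k f = fsum k (fun j => c * f j).
Proof. induction k as [|k IH]; simpl. ring. rewrite <- IH. ring. Qed.

Lemma fsum_le k f g : (forall j, (j < k)%nat -> f j <= g j) -> fsum k f <= fsum k g.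
Proof.
  induction k as [|k IH]; intros H; simpl. lra.
  apply Rplus_le_compat. apply IH. intros; apply H; lia. apply H; lia.
Qed.

Lemma ind_gt_01 a b : 0 <= ind_gt a b <= 1.
Proof. unfold ind_gt. destruct (Rlt_dec b a); lra. Qed.

Lemma RInt_le_indicator (F : R -> R) G y t : 0 <= G -> 0 <= y -> 0 <= t -> ex_RInt F 0 t ->
  (forall s, 0 <= s <= t -> F s <= G * ind_gt y s) -> RInt F 0 t <= G * y.
Proof.
  intros HG Hy Ht HF Hdom.
  assert (HdomG : forall s, 0 <= s <= t -> F s <= G)
    by (intros s Hs; assert (H01 := ind_gt_01 y s); specialize (Hdom s Hs); nra).
  destruct (Rle_dec t y).
  - apply Rle_trans with (G * (t - 0)); [|nra].
    rewrite <- RInt_constR. apply RInt_le; auto. apply ex_RInt_constR.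
    intros x Hx. apply HdomG; lra.
  - rewrite <- (RInt_ChaslesR F 0 y t).
    2: { apply ex_RInt_sub_l with t. lra. auto. }
    2: { apply ex_RInt_sub_r with 0. lra. auto. }
    assert (RInt F 0 y <= G * (y - 0)).
    { rewrite <- RInt_constR. apply RInt_le. auto. apply ex_RInt_sub_l with t. lra. auto.
      apply ex_RInt_constR. intros x Hx. apply HdomG; lra. }
    assert (RInt F y t <= 0 * (t - y)).
    { rewrite <- RInt_constR. apply RInt_le. lra. apply ex_RInt_sub_r with 0. lra. auto.
      apply ex_RInt_constR. intros x Hx. specialize (Hdom x ltac:(lra)).
      unfold ind_gt in Hdom. destruct (Rlt_dec x y); lra. }
    lra.
Qed.

Lemma tilted_summand_bound (lam r G t y : R) (Rs : R -> R) :
  0 <= lam -> 0 <= r -> 0 <= G -> 0 <= t -> 0 <= y ->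
  ex_RInt Rs 0 t ->
  (forall u, 0 <= u -> exp (- (r * u)) * Rs u <= G) ->
  exp (- (r * t)) * (lam * ind_gt y t + lam * RI (fun s => Rs (t - s) * ind_gt y s) 0 t)
  <= lam * (1 + G * y).
Proof.
  intros Hl Hr HG Ht Hy HRs Hb.
  assert (Hi : ex_RInt (fun s => Rs (t - s) * ind_gt y s) 0 t).
  { apply ex_RInt_mul_monotone. auto. apply ex_RInt_reflect; auto.
    - intros s u H1 H2 H3. unfold ind_gt. destruct (Rlt_dec u y); destruct (Rlt_dec s y); lra.
    - intros; apply ind_gt_01. }
  rewrite RI_RInt by auto.
  assert (He1 : exp (- (r * t)) <= 1) by (apply exp_le_1; nra).
  assert (He0 : 0 < exp (- (r * t))) by apply exp_pos.
  assert (Hconv : exp (- (r * t)) * RInt (fun s => Rs (t - s) * ind_gt y s) 0 t <= G * y).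
  { rewrite <- RInt_scalR by auto.
    apply RInt_le_indicator; auto. apply ex_RInt_scalR; auto.
    intros s Hs.
    (* exp(-r t) R(t-s) = exp(-r s) (exp(-r (t-s)) R(t-s)) <= max(G, 0) = G *)
    assert (Htilt : exp (- (r * t)) * Rs (t - s) <= G).
    { replace (exp (- (r * t)) * Rs (t - s))
        with (exp (- (r * s)) * (exp (- (r * (t - s))) * Rs (t - s)))
        by (replace (exp (- (r * t))) with (exp (- (r * s)) * exp (- (r * (t - s))))
              by (rewrite <- exp_plus; f_equal; ring); ring).
      assert (Hes : exp (- (r * s)) <= 1) by (apply exp_le_1; nra).
      assert (Hes0 : 0 < exp (- (r * s))) by apply exp_pos.
      assert (Hgs := Hb (t - s) ltac:(lra)).
      destruct (Rle_dec 0 (exp (- (r * (t - s))) * Rs (t - s))); nra. }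
    assert (H01 := ind_gt_01 y s).
    replace (exp (- (r * t)) * (Rs (t - s) * ind_gt y s))
      with ((exp (- (r * t)) * Rs (t - s)) * ind_gt y s) by ring.
    nra. }
  assert (Hind := ind_gt_01 y t).
  assert (exp (- (r * t)) * ind_gt y t <= 1) by nra.
  assert (lam * (exp (- (r * t)) * ind_gt y t) <= lam * 1) by (apply Rmult_le_compat_l; lra).
  assert (lam * (exp (- (r * t)) * RInt (fun s => Rs (t - s) * ind_gt y s) 0 t) <= lam * (G * y))
    by (apply Rmult_le_compat_l; lra).
  nra.
Qed.

Lemma Rbeta_tky_bound (beta gam lam K Lmax Kmax : R) (Lb Rs : R -> R) k (y : nat -> R) t :
  0 < lam <= Lmax -> 0 < K <= Kmax -> 0 <= beta -> 0 < gam -> prob_tail Lb ->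
  (forall T, 0 <= T -> ex_RInt Rs 0 T) ->
  (forall t, 0 <= t -> Rs t = K * Lb t + K * RI (fun s => Rs (t - s) * Lb s) 0 t) ->
  (forall T, 0 <= T -> K * RInt (fun s => exp (- (beta / gam * s)) * Lb s) 0 T <= 1) ->
  (forall j, (j < k)%nat -> 0 <= y j) -> 0 <= t ->
  Rbeta_tky beta gam lam Rs t k y <= Lmax * (1 + 362 * Kmax) * fsum k (fun j => 1 + y j).
Proof.
  intros Hlam HK Hbeta Hgam HLb HRs HRe Hmass Hy Ht.
  assert (Hr : 0 <= beta / gam) by (apply Rdiv_le_0_compat; lra).
  assert (Htilt := tilted_renewal_bound K (beta / gam) Lb Rs ltac:(lra) Hr HLb HRs HRe Hmass).
  unfold Rbeta_tky, Rtky.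
  replace (- beta * t / gam) with (- (beta / gam * t)) by (field; lra).
  rewrite fsum_scal, fsum_scal. apply fsum_le. intros j Hj.
  assert (Hyj := Hy j Hj).
  assert (Hterm := tilted_summand_bound lam (beta / gam) (362 * K) t (y j) Rs
                     ltac:(lra) Hr ltac:(lra) Ht Hyj (HRs t Ht) Htilt).
  apply Rle_trans with (lam * (1 + 362 * K * y j)); auto.
  assert (1 + 362 * K * y j <= (1 + 362 * Kmax) * (1 + y j)) by nra.
  assert (0 <= 1 + 362 * K * y j) by nra.
  nra.
Qed.

Theorem lemma5p5
  (lam : nat -> R) (Lb : nat -> R -> R) (eta sig : nat -> R)
  (p q : nat -> nat -> R) (m : nat -> R) (gam : nat -> R) (gstar : R)
  (lamL etaL sigL b mlim : R) (psi phi : R -> R) (alpha beta : R)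
  (Rs : nat -> R -> R)
  (* standing assumptions, n >= 1 *)
  (Hlam : forall n, (1 <= n)%nat -> 0 < lam n)
  (HLb : forall n, (1 <= n)%nat -> prob_tail (Lb n))
  (Heta : forall n, (1 <= n)%nat -> ImpInt (Lb n) (eta n))
  (Hsig : forall n, (1 <= n)%nat -> ImpInt (fun t => t * Lb n t) (sig n))
  (Hp : forall n, (1 <= n)%nat -> prob_Zplus (p n))
  (Hq : forall n, (1 <= n)%nat -> prob_Zplus (q n))
  (Hm : forall n, (1 <= n)%nat -> infinite_sum (fun k => INR k * p n k) (m n))
  (Hgam_pos : forall n, (1 <= n)%nat -> 0 < gam n)
  (Hgam_inf : cv_infty gam)
  (Hgam_n : Un_cv (fun n => gam n / INR n) gstar)
  (Hgstar : 0 <= gstar)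
  (* Condition 1 (i) *)
  (H1lam : Un_cv lam lamL) (H1lamp : 0 < lamL)
  (H1eta : Un_cv eta etaL) (H1etap : 0 < etaL)
  (H1sig : Un_cv sig sigL) (H1sigp : 0 < sigL)
  (H1b : Un_cv (fun n => gam n * (1 - lam n * eta n)) b)
  (* Condition 1 (ii) *)
  (H1psi : forall K, 0 <= K -> forall eps, 0 < eps -> exists N, forall n, (N <= n)%nat ->
      forall z, 0 <= z <= K -> z <= INR n ->
      Rabs (psi_n (q n) (gam n) n z - psi z) < eps)
  (* Condition 1 (iii) *)
  (H1phiLip : forall K, 0 <= K -> exists L, forall n, (1 <= n)%nat ->
      forall z1 z2, 0 <= z1 <= K -> z1 <= INR n -> 0 <= z2 <= K -> z2 <= INR n ->
      Rabs (phi_n (p n) (gam n) n z1 - phi_n (p n) (gam n) n z2) <= L * Rabs (z1 - z2))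
  (H1phi : forall K, 0 <= K -> forall eps, 0 < eps -> exists N, forall n, (N <= n)%nat ->
      forall z, 0 <= z <= K -> z <= INR n ->
      Rabs (phi_n (p n) (gam n) n z - phi z) < eps)
  (H1phicont : forall z, 0 <= z -> forall eps, 0 < eps -> exists d, 0 < d /\
      forall z', 0 <= z' -> Rabs (z' - z) < d -> Rabs (phi z' - phi z) < eps)
  (* m := lim gam_n (1 - m^(n)) (exists under Condition 1) *)
  (Hmlim : Un_cv (fun n => gam n * (1 - m n)) mlim)
  (* Condition 2 *)
  (Halpha : 1 < alpha < 2)
  (H2a : exists C k0, 0 < C /\ (0 < k0)%nat /\
      forall n, (1 <= n)%nat -> forall N,
        INR n * gam n * fsum_range k0 N (fun k => Rpower (INR k / INR n) alpha * p n k)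
        + fsum_range 1 N (fun k => Rpower (INR k) alpha * q n k) <= C)
  (H2b : forall eps, 0 < eps -> exists K1, forall k1, (K1 <= k1)%nat ->
      exists N, forall n, (N <= n)%nat -> forall M,
        gam n * fsum_range k1 M (fun k => INR k * p n k) <= eps)
  (H2c : exists (C0 : R) (Ls : R -> R), 0 < C0 /\ prob_tail Ls /\
      (exists l, ImpInt (fun t => 2 * alpha * Rpower t (2 * alpha - 1) * Ls t) l) /\
      forall n, (1 <= n)%nat -> forall t, 0 <= t -> Lb n t <= C0 * Ls t)
  (* beta *)
  (Hbeta0 : 0 <= beta)
  (Hbeta : - (b + mlim) / (sigL * lamL) < beta)
  (* R^(n): the (unique) locally integrable solution of the renewal equation *)
  (HRs_int : forall n, (1 <= n)%nat -> forall T, 0 <= T ->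
      inhabited (Riemann_integrable (Rs n) 0 T))
  (HRs_eq : forall n, (1 <= n)%nat -> forall t, 0 <= t ->
      Rs n t = lam n * m n * Lb n t
               + lam n * m n * RI (fun s => Rs n (t - s) * Lb n s) 0 t) :
  exists C, 0 < C /\ exists n0 : nat, (1 <= n0)%nat /\
    forall k : nat, (1 <= k)%nat -> forall y : nat -> R, (forall j, (j < k)%nat -> 0 <= y j) ->
    forall n, (n0 <= n)%nat -> forall t, 0 <= t ->
      Rbeta_tky beta (gam n) (lam n) (Rs n) t k y <= C * fsum k (fun j => 1 + y j).
Proof.
  destruct H2c as [C0 [Ls [HC0 [HLs [[l Hl] Hdom]]]]].
  assert (HK : Un_cv (fun n => lam n * m n) lamL).
  { pose proof (CV_mult _ _ _ _ H1lam (cv_one_of_scaled_defect gam m mlim Hgam_inf Hmlim)) as H.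
    rewrite Rmult_1_r in H. exact H. }
  assert (Hcrit : - (b + mlim) < beta * lamL * sigL).
  { apply Rmult_lt_compat_r with (r := sigL * lamL) in Hbeta; [|nra].
    replace (- (b + mlim) / (sigL * lamL) * (sigL * lamL)) with (- (b + mlim)) in Hbeta
      by (field; lra).
    lra. }
  destruct (eventually_subcritical gam (fun n => lam n * m n) eta sig lamL sigL (- (b + mlim)) beta
              Hgam_inf HK H1sig (critical_drift_limit gam lam eta m b mlim Hgam_inf H1b Hmlim)
              Hbeta0 Hcrit) as [del [Hdel Hsub]].
  destruct (uniform_first_moment_tail alpha C0 l Ls Lb (proj1 Halpha) HC0 HLs Hl HLb Hdom del Hdel)
    as [S [HS Htail]].
  destruct (Hsub S) as [N1 HN1].
  destruct (cv_eventually_gt _ _ 0 HK H1lamp) as [N2 HN2].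
  destruct (cv_eventually_lt _ _ (lamL + 1) HK ltac:(lra)) as [N3 HN3].
  destruct (cv_eventually_lt _ _ (lamL + 1) H1lam ltac:(lra)) as [N4 HN4].
  exists ((lamL + 1) * (1 + 362 * (lamL + 1))). split; [nra|].
  exists (Nat.max 1 (Nat.max N1 (Nat.max N2 (Nat.max N3 N4)))). split; [lia|].
  intros k Hk y Hy n Hn t Ht.
  assert (Hn1 : (1 <= n)%nat) by lia.
  assert (Hgam : 0 < gam n) by auto.
  apply Rbeta_tky_bound with (K := lam n * m n) (Lb := Lb n); auto.
  - split; [auto | apply Rlt_le, HN4; lia].
  - split; [apply HN2; lia | apply Rlt_le, HN3; lia].
  - intros T HT. apply ex_RInt_of_Riemann. auto.
  - intros T HT. eapply Rle_trans; [|apply (HN1 n); lia].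
    apply Rmult_le_compat_l; [apply Rlt_le, HN2; lia|].
    apply laplace_tail_bound; auto.
    apply Rdiv_le_0_compat; lra.
Qed.
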